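(* Let $\xi:\mathbb{R}\to\mathbb{R}^3$ be a smooth, $L$-periodic, arclength-parametrized curve with curvature $k>0$ and torsion $\tau$. Let $\alpha:\mathbb{R}\to\mathbb{R}$ satisfy $\alpha'=\tau$, and let $J=\{t:\cos\alpha(t)\neq0\}$. Let $\eta(t)=\xi(t)+r(t)\mathbf{n}(t)-r(t)\tan\alpha(t)\,\mathbf{b}(t)$ for $t\in J$ be the corresponding Monge evolute. Then: (i) $J+L=J$ and $\eta(t+L)=\eta(t)$ for all $t\in J$ if and only if $\int_0^L\tau\,dt\in\pi\mathbb{Z}$. (ii) In particular, this holds if $\xi$ is centrally symmetric. Here this means that there exist $c\in\mathbb{R}^3$ and $t_1\in\mathbb{R}$ such that either $\xi(t+t_1)=2c-\xi(t)$ for all $t$, or $\xi(t_1-t)=2c-\xi(t)$ for all $t$; in these cases $\int_0^L\tau\,dt=0$.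
   Context: $r=1/k$, and $(\mathbf{t},\mathbf{n},\mathbf{b})$ is the Frenet frame of $\xi$. A Monge evolute of $\xi$ is a curve $\eta=\xi+y\mathbf{n}+z\mathbf{b}$ with $\eta'$ parallel to $\eta-\xi$. These are exactly the curves $\xi+r\mathbf{n}-r\tan\alpha\,\mathbf{b}$ with $\alpha'=\tau$. *)

From Stdlib Require Import Reals.
From Coquelicot Require Import Coquelicot.
Open Scope R_scope.

Definition vec3 : Type := (R * R * R)%type.
Definition v1 (v : vec3) : R := fst (fst v).
Definition v2 (v : vec3) : R := snd (fst v).
Definition v3 (v : vec3) : R := snd v.
Definition mk3 (a b c : R) : vec3 := (a, b, c).

Definition vadd (u v : vec3) : vec3 := mk3 (v1 u + v1 v) (v2 u + v2 v) (v3 u + v3 v).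
Definition vscal (a : R) (v : vec3) : vec3 := mk3 (a * v1 v) (a * v2 v) (a * v3 v).
Definition vsub (u v : vec3) : vec3 := vadd u (vscal (-1) v).
Definition vdot (u v : vec3) : R := v1 u * v1 v + v2 u * v2 v + v3 u * v3 v.
Definition vnorm (v : vec3) : R := sqrt (vdot v v).
Definition vcross (u v : vec3) : vec3 :=
  mk3 (v2 u * v3 v - v3 u * v2 v) (v3 u * v1 v - v1 u * v3 v) (v1 u * v2 v - v2 u * v1 v).

Definition smooth_fun (f : R -> R) : Prop := forall (n : nat) (t : R), ex_derive_n f n t.
Definition smooth_curve (xi : R -> vec3) : Prop :=
  smooth_fun (fun t => v1 (xi t)) /\ smooth_fun (fun t => v2 (xi t)) /\
  smooth_fun (fun t => v3 (xi t)).
Definition dcurve (xi : R -> vec3) (t : R) : vec3 :=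
  mk3 (Derive (fun s => v1 (xi s)) t) (Derive (fun s => v2 (xi s)) t)
      (Derive (fun s => v3 (xi s)) t).

(* Frenet apparatus of an arclength-parametrized curve with k > 0. *)
Definition tangent (xi : R -> vec3) (t : R) : vec3 := dcurve xi t.
Definition curvature (xi : R -> vec3) (t : R) : R := vnorm (dcurve (dcurve xi) t).
Definition normal (xi : R -> vec3) (t : R) : vec3 :=
  vscal (/ curvature xi t) (dcurve (dcurve xi) t).
Definition binormal (xi : R -> vec3) (t : R) : vec3 :=
  vcross (tangent xi t) (normal xi t).
(* Frenet: n' = -k t + tau b *)
Definition torsion (xi : R -> vec3) (t : R) : R :=
  vdot (dcurve (normal xi) t) (binormal xi t).
Definition radius (xi : R -> vec3) (t : R) : R := / curvature xi t.

Definition Jset (alpha : R -> R) (t : R) : Prop := cos (alpha t) <> 0.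

(* Monge evolute eta = xi + r n - r tan(alpha) b  (meaningful on J) *)
Definition monge_evolute (xi : R -> vec3) (alpha : R -> R) (t : R) : vec3 :=
  vadd (vadd (xi t) (vscal (radius xi t) (normal xi t)))
       (vscal (- (radius xi t * tan (alpha t))) (binormal xi t)).

Definition evolute_periodic (xi : R -> vec3) (alpha : R -> R) (L : R) : Prop :=
  (forall s : R, (exists t, Jset alpha t /\ s = t + L) <-> Jset alpha s) /\
  (forall t : R, Jset alpha t -> monge_evolute xi alpha (t + L) = monge_evolute xi alpha t).

Definition centrally_symmetric (xi : R -> vec3) : Prop :=
  exists (c : vec3) (t1 : R),
    (forall t, xi (t + t1) = vsub (vscal 2 c) (xi t)) \/
    (forall t, xi (t1 - t) = vsub (vscal 2 c) (xi t)).

From Stdlib Require Import Reals Lra.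
From Coquelicot Require Import Coquelicot.
Open Scope R_scope.

(** Write [d = alpha L - alpha 0].  The whole theorem reduces to the two facts
    - (a) [alpha (t + L) = alpha t + d] for every [t], and [RInt torsion 0 L = d];
    - (b) [J + L = J] and [eta (t + L) = eta t] on [J] iff [sin d = 0].
    Both rest on one symmetry principle: if [xi (sg t + a) = K + e xi t] with
    [sg, e = ±1] (a "rigid reparametrization"), then the Frenet frame transforms
    as [n ↦ e n], [b ↦ sg b], the radius is unchanged and [tau ↦ e tau]; hence
    [alpha (sg t + a) = sg e alpha t + const].  Periodicity is the case
    [sg = e = 1], central symmetry the case [e = -1], where the relation for
    [alpha] forces [d = 0].  For (a) we also need [tau] continuous (fundamental
    theorem of calculus), which follows from [C^1] closure properties; for (b)
    we need [|b| = 1], i.e. that the unit tangent is orthogonal to [xi'']. *)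

(** * Scalar calculus *)

(** Specializations of Coquelicot's generic rules to real-valued functions,
    which unify directly with goals written using [+], [-], [*]. *)
Lemma continuous_Rplus (f g : R -> R) (t : R) :
  continuous f t -> continuous g t -> continuous (fun s => f s + g s) t.
Proof. exact (continuous_plus f g t). Qed.

Lemma continuous_Rminus (f g : R -> R) (t : R) :
  continuous f t -> continuous g t -> continuous (fun s => f s - g s) t.
Proof. exact (continuous_minus f g t). Qed.

Lemma continuous_Rmult (f g : R -> R) (t : R) :
  continuous f t -> continuous g t -> continuous (fun s => f s * g s) t.
Proof. exact (continuous_mult f g t). Qed.

Lemma is_derive_Rplus (f g : R -> R) (t df dg : R) :
  is_derive f t df -> is_derive g t dg -> is_derive (fun s => f s + g s) t (df + dg).
Proof. exact (is_derive_plus f g t df dg). Qed.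

Lemma is_derive_Rminus (f g : R -> R) (t df dg : R) :
  is_derive f t df -> is_derive g t dg -> is_derive (fun s => f s - g s) t (df - dg).
Proof. exact (is_derive_minus f g t df dg). Qed.

Lemma is_derive_square (f : R -> R) (t : R) :
  ex_derive f t -> is_derive (fun s => f s * f s) t (2 * f t * Derive f t).
Proof.
  intros Hf.
  replace (2 * f t * Derive f t) with (Derive f t * f t + f t * Derive f t) by ring.
  apply (is_derive_mult f f); auto using Derive_correct, Rmult_comm.
Qed.

Lemma is_derive_affine_comp (f : R -> R) (sg a t l : R) :
  is_derive f (sg * t + a) l -> is_derive (fun s => f (sg * s + a)) t (sg * l).
Proof.
  intros Hf. apply (is_derive_comp f (fun s => sg * s + a)); [exact Hf|].
  auto_derive; [exact I | ring].
Qed.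

Lemma RInt_of_primitive (f g : R -> R) (a b : R) :
  (forall x, is_derive f x (g x)) -> (forall x, continuous g x) ->
  RInt g a b = f b - f a.
Proof.
  intros Hd Hc. apply is_RInt_unique, (is_RInt_derive f g); auto.
Qed.

Lemma constant_of_zero_derivative (g : R -> R) (a b : R) :
  (forall x, is_derive g x 0) -> g b = g a.
Proof.
  intros Hd.
  pose proof (RInt_of_primitive g (fun _ => 0) a b Hd (fun x => continuous_const 0 x)) as H.
  rewrite RInt_const in H. change (scal (b - a) 0) with ((b - a) * 0) in H. lra.
Qed.

Lemma primitive_affine_reparam (f g : R -> R) (sg e a : R) :
  (forall t, is_derive f t (g t)) -> (forall t, g (sg * t + a) = e * g t) ->
  forall t, f (sg * t + a) = sg * e * f t + (f a - sg * e * f 0).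
Proof.
  intros Hd Hg t.
  assert (Hzero : forall x, is_derive (fun s => f (sg * s + a) - sg * e * f s) x 0).
  { intros x. replace 0 with (sg * g (sg * x + a) - sg * e * g x) by (rewrite Hg; ring).
    apply is_derive_Rminus; [apply is_derive_affine_comp, Hd | apply is_derive_scal, Hd]. }
  pose proof (constant_of_zero_derivative _ 0 t Hzero) as H. cbv beta in H.
  rewrite Rmult_0_r, Rplus_0_l in H. lra.
Qed.

Lemma Derive_affine_reparam (h : R -> R) (sg e a K t : R) :
  sg * sg = 1 -> (forall s, ex_derive h s) ->
  (forall s, h (sg * s + a) = K + e * h s) ->
  Derive h (sg * t + a) = sg * e * Derive h t.
Proof.
  intros Hsg Hd Hh.
  assert (D1 : is_derive (fun s => h (sg * s + a)) t (sg * Derive h (sg * t + a)))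
    by (apply is_derive_affine_comp, Derive_correct, Hd).
  assert (D2 : is_derive (fun s => h (sg * s + a)) t (e * Derive h t)).
  { apply is_derive_ext with (fun s => K + e * h s); [intros s; symmetry; apply Hh|].
    replace (e * Derive h t) with (0 + e * Derive h t) by ring.
    apply is_derive_Rplus; [apply (is_derive_const K) | apply is_derive_scal, Derive_correct, Hd]. }
  apply is_derive_unique in D1. apply is_derive_unique in D2.
  transitivity (sg * sg * Derive h (sg * t + a)); [rewrite Hsg; ring|].
  rewrite Rmult_assoc, <- D1, D2. ring.
Qed.

(** [C^1] functions, with the closure properties needed to see that the
    curvature, the principal normal and hence the torsion are regular enough. *)
Definition C1 (f : R -> R) : Prop :=
  exists f' : R -> R, (forall t, is_derive f t (f' t)) /\ (forall t, continuous f' t).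

Lemma C1_ex_derive (f : R -> R) (t : R) : C1 f -> ex_derive f t.
Proof. intros [f' [Hd _]]. exists (f' t). apply Hd. Qed.

Lemma C1_continuous (f : R -> R) (t : R) : C1 f -> continuous f t.
Proof. intros Hf. apply (ex_derive_continuous (V := R_NormedModule)), C1_ex_derive, Hf. Qed.

Lemma C1_Derive_continuous (f : R -> R) (t : R) : C1 f -> continuous (Derive f) t.
Proof.
  intros [f' [Hd Hc]]. apply continuous_ext with f'; [|apply Hc].
  intros s. symmetry. apply is_derive_unique, Hd.
Qed.

Lemma C1_plus (f g : R -> R) : C1 f -> C1 g -> C1 (fun t => f t + g t).
Proof.
  intros [f' [Hf Cf]] [g' [Hg Cg]]. exists (fun t => f' t + g' t). split; intros t.
  - apply is_derive_Rplus; auto.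
  - apply continuous_Rplus; auto.
Qed.

Lemma C1_mult (f g : R -> R) : C1 f -> C1 g -> C1 (fun t => f t * g t).
Proof.
  intros HCf HCg. pose proof HCf as [f' [Hf Cf]]. pose proof HCg as [g' [Hg Cg]].
  exists (fun t => f' t * g t + f t * g' t). split; intros t.
  - exact (is_derive_mult f g t _ _ (Hf t) (Hg t) Rmult_comm).
  - apply continuous_Rplus; apply continuous_Rmult; auto using C1_continuous.
Qed.

Lemma C1_inv (f : R -> R) : C1 f -> (forall t, f t <> 0) -> C1 (fun t => / f t).
Proof.
  intros HCf Hnz. pose proof HCf as [f' [Hf Cf]].
  exists (fun t => - f' t * / (f t * f t)). split; intros t.
  - replace (- f' t * / (f t * f t)) with (- f' t / f t ^ 2) by (field; apply Hnz).
    apply is_derive_inv; auto.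
  - apply continuous_Rmult; [exact (continuous_opp f' t (Cf t))|].
    apply continuous_Rinv_comp; [apply continuous_Rmult; apply C1_continuous, HCf|].
    apply Rmult_integral_contrapositive; auto.
Qed.

Lemma C1_sqrt (f : R -> R) : C1 f -> (forall t, 0 < f t) -> C1 (fun t => sqrt (f t)).
Proof.
  intros HCf Hpos. pose proof HCf as [f' [Hf Cf]].
  exists (fun t => f' t * / (2 * sqrt (f t))). split; intros t.
  - apply is_derive_sqrt; auto.
  - apply continuous_Rmult; [apply Cf|]. apply continuous_Rinv_comp.
    + apply continuous_Rmult; [apply continuous_const|].
      apply continuous_sqrt_comp, C1_continuous, HCf.
    + pose proof (sqrt_lt_R0 _ (Hpos t)). lra.
Qed.

Lemma smooth_Derive_n_C1 (f : R -> R) (n : nat) : smooth_fun f -> C1 (Derive_n f n).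
Proof.
  intros Hf. exists (Derive_n f (S n)). split; intros t.
  - apply Derive_correct, (Hf (S n)).
  - apply (ex_derive_continuous (V := R_NormedModule)), (Hf (S (S n))).
Qed.

(** * Vectors and curves in R^3 *)

Lemma vec3_eq (u v : vec3) : v1 u = v1 v -> v2 u = v2 v -> v3 u = v3 v -> u = v.
Proof. destruct u as [[x y] z], v as [[x' y'] z']. cbn. intros -> -> ->. reflexivity. Qed.

Lemma vadd_zero_l (v : vec3) : vadd (mk3 0 0 0) v = v.
Proof. apply vec3_eq; cbn; ring. Qed.

Lemma vscal_one (v : vec3) : vscal 1 v = v.
Proof. apply vec3_eq; cbn; ring. Qed.

Lemma vscal_scal (x y : R) (v : vec3) : vscal x (vscal y v) = vscal (x * y) v.
Proof. apply vec3_eq; cbn; ring. Qed.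

Lemma vcross_scal (x y : R) (u v : vec3) :
  vcross (vscal x u) (vscal y v) = vscal (x * y) (vcross u v).
Proof. apply vec3_eq; cbn; ring. Qed.

Lemma vdot_scal (x y : R) (u v : vec3) : vdot (vscal x u) (vscal y v) = x * y * vdot u v.
Proof. unfold vdot; cbn; ring. Qed.

Lemma vdot_scal_r (y : R) (u v : vec3) : vdot u (vscal y v) = y * vdot u v.
Proof. unfold vdot; cbn; ring. Qed.

Lemma vdot_self_nonneg (v : vec3) : 0 <= vdot v v.
Proof. unfold vdot. nra. Qed.

Lemma vnorm_sqr (v : vec3) : vnorm v * vnorm v = vdot v v.
Proof. apply sqrt_sqrt, vdot_self_nonneg. Qed.

Lemma lagrange_identity (u v : vec3) :
  vdot (vcross u v) (vcross u v) = vdot u u * vdot v v - vdot u v * vdot u v.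
Proof. unfold vdot; cbn; ring. Qed.

Definition componentwise (P : (R -> R) -> Prop) (c : R -> vec3) : Prop :=
  P (fun s => v1 (c s)) /\ P (fun s => v2 (c s)) /\ P (fun s => v3 (c s)).

Lemma componentwise_impl (P Q : (R -> R) -> Prop) (c : R -> vec3) :
  (forall f, P f -> Q f) -> componentwise P c -> componentwise Q c.
Proof. intros H [H1 [H2 H3]]. split; [|split]; auto. Qed.

Lemma continuous_vdot (u v : R -> vec3) (t : R) :
  componentwise (fun f => continuous f t) u -> componentwise (fun f => continuous f t) v ->
  continuous (fun s => vdot (u s) (v s)) t.
Proof.
  intros [U1 [U2 U3]] [V1 [V2 V3]]. unfold vdot.
  apply continuous_Rplus; [apply continuous_Rplus|]; apply continuous_Rmult; assumption.
Qed.

Lemma continuous_vcross (u v : R -> vec3) (t : R) :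
  componentwise (fun f => continuous f t) u -> componentwise (fun f => continuous f t) v ->
  componentwise (fun f => continuous f t) (fun s => vcross (u s) (v s)).
Proof.
  intros [U1 [U2 U3]] [V1 [V2 V3]].
  split; [|split]; cbn -[v1 v2 v3];
    apply continuous_Rminus; apply continuous_Rmult; assumption.
Qed.

Lemma C1_vdot (u v : R -> vec3) :
  componentwise C1 u -> componentwise C1 v -> C1 (fun s => vdot (u s) (v s)).
Proof.
  intros [U1 [U2 U3]] [V1 [V2 V3]]. unfold vdot.
  apply C1_plus; [apply C1_plus|]; apply C1_mult; assumption.
Qed.

Lemma is_derive_vdot_self (c : R -> vec3) (t : R) :
  componentwise (fun f => ex_derive f t) c ->
  is_derive (fun s => vdot (c s) (c s)) t (2 * vdot (c t) (dcurve c t)).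
Proof.
  intros [H1 [H2 H3]]. unfold vdot, dcurve; cbn -[Derive].
  replace (2 * _) with (2 * v1 (c t) * Derive (fun s => v1 (c s)) t
    + 2 * v2 (c t) * Derive (fun s => v2 (c s)) t
    + 2 * v3 (c t) * Derive (fun s => v3 (c s)) t) by ring.
  apply is_derive_Rplus; [apply is_derive_Rplus|]; apply is_derive_square; assumption.
Qed.

Lemma dcurve_affine_reparam (c : R -> vec3) (sg e a : R) (K : vec3) :
  sg * sg = 1 -> componentwise (fun f => forall s, ex_derive f s) c ->
  (forall t, c (sg * t + a) = vadd K (vscal e (c t))) ->
  forall t, dcurve c (sg * t + a) = vscal (sg * e) (dcurve c t).
Proof.
  intros Hsg [D1 [D2 D3]] Hc t. unfold dcurve. apply vec3_eq; cbn -[Derive].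
  - apply (Derive_affine_reparam _ sg e a (v1 K)); auto. intros s. rewrite Hc. reflexivity.
  - apply (Derive_affine_reparam _ sg e a (v2 K)); auto. intros s. rewrite Hc. reflexivity.
  - apply (Derive_affine_reparam _ sg e a (v3 K)); auto. intros s. rewrite Hc. reflexivity.
Qed.

(** * The Frenet apparatus *)

Section Frenet.

Variable xi : R -> vec3.
Hypothesis Hsmooth : smooth_curve xi.
Hypothesis Hcurv : forall t, 0 < curvature xi t.

Lemma velocity_C1 : componentwise C1 (dcurve xi).
Proof.
  destruct Hsmooth as [H1 [H2 H3]].
  split; [|split]; apply (smooth_Derive_n_C1 _ 1); assumption.
Qed.

Lemma acceleration_C1 : componentwise C1 (dcurve (dcurve xi)).
Proof.
  destruct Hsmooth as [H1 [H2 H3]].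
  split; [|split]; apply (smooth_Derive_n_C1 _ 2); assumption.
Qed.

(** [k = |xi''|] is [C^1] because [|xi''|² > 0]. *)
Lemma curvature_C1 : C1 (curvature xi).
Proof.
  unfold curvature, vnorm. apply C1_sqrt.
  - apply C1_vdot; apply acceleration_C1.
  - intros t. pose proof (Hcurv t) as Hk. unfold curvature, vnorm in Hk.
    destruct (Rle_lt_dec (vdot (dcurve (dcurve xi) t) (dcurve (dcurve xi) t)) 0) as [Hle | Hlt].
    + rewrite (sqrt_neg_0 _ Hle) in Hk. lra.
    + exact Hlt.
Qed.

Lemma normal_C1 : componentwise C1 (normal xi).
Proof.
  assert (Hinv : C1 (fun t => / curvature xi t)).
  { apply C1_inv; [exact curvature_C1 | intros t; apply Rgt_not_eq, Hcurv]. }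
  destruct acceleration_C1 as [A1 [A2 A3]].
  split; [|split]; [exact (C1_mult _ _ Hinv A1) | exact (C1_mult _ _ Hinv A2)
                   | exact (C1_mult _ _ Hinv A3)].
Qed.

Lemma torsion_continuous (t : R) : continuous (torsion xi) t.
Proof.
  apply continuous_vdot.
  - destruct normal_C1 as [N1 [N2 N3]].
    split; [|split]; apply C1_Derive_continuous; assumption.
  - apply continuous_vcross;
      [apply (componentwise_impl C1 _ _ (fun f Hf => C1_continuous f t Hf) velocity_C1)
      |apply (componentwise_impl C1 _ _ (fun f Hf => C1_continuous f t Hf) normal_C1)].
Qed.

Lemma velocity_orthogonal_acceleration (t : R) :
  (forall s, vnorm (tangent xi s) = 1) ->
  vdot (dcurve xi t) (dcurve (dcurve xi) t) = 0.
Proof.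
  intros Hunit.
  assert (Hconst : forall s, vdot (dcurve xi s) (dcurve xi s) = 1).
  { intros s. rewrite <- vnorm_sqr. unfold tangent in Hunit. rewrite Hunit. ring. }
  assert (D : is_derive (fun s => vdot (dcurve xi s) (dcurve xi s)) t
                (2 * vdot (dcurve xi t) (dcurve (dcurve xi) t))).
  { apply is_derive_vdot_self.
    apply (componentwise_impl C1 _ _ (fun f Hf => C1_ex_derive f t Hf) velocity_C1). }
  assert (D0 : is_derive (fun s => vdot (dcurve xi s) (dcurve xi s)) t 0).
  { apply is_derive_ext with (fun _ => 1); [intros s; symmetry; apply Hconst|].
    apply (is_derive_const 1). }
  pose proof (is_derive_unique _ _ _ D) as E. rewrite (is_derive_unique _ _ _ D0) in E. lra.
Qed.

Lemma normal_unit (t : R) : vdot (normal xi t) (normal xi t) = 1.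
Proof.
  unfold normal. rewrite vdot_scal, <- vnorm_sqr. fold (curvature xi t).
  field. apply Rgt_not_eq, Hcurv.
Qed.

(** [b = t × n] is a unit vector, by Lagrange's identity. *)
Lemma binormal_unit (t : R) :
  (forall s, vnorm (tangent xi s) = 1) -> vdot (binormal xi t) (binormal xi t) = 1.
Proof.
  intros Hunit. unfold binormal. rewrite lagrange_identity, normal_unit.
  assert (Htt : vdot (tangent xi t) (tangent xi t) = 1)
    by (rewrite <- vnorm_sqr, Hunit; ring).
  assert (Htn : vdot (tangent xi t) (normal xi t) = 0).
  { unfold normal, tangent. rewrite vdot_scal_r, (velocity_orthogonal_acceleration t Hunit).
    ring. }
  rewrite Htt, Htn. ring.
Qed.

(** [xi (sg t + a) = K + e xi t] with [sg, e = ±1]: periodicity is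
    [sg = e = 1], a central symmetry is [e = -1]. *)
Definition rigid_reparam (sg e a : R) : Prop :=
  sg * sg = 1 /\ e * e = 1 /\
  exists K : vec3, forall t, xi (sg * t + a) = vadd K (vscal e (xi t)).

Section Rigid.

Variables sg e a : R.
Hypothesis Hrigid : rigid_reparam sg e a.

Lemma velocity_rigid (t : R) : dcurve xi (sg * t + a) = vscal (sg * e) (dcurve xi t).
Proof.
  destruct Hrigid as [Hsg [_ [K HK]]]. apply (dcurve_affine_reparam xi sg e a K Hsg); auto.
  exact (componentwise_impl smooth_fun _ xi (fun f Hf s => Hf 1%nat s) Hsmooth).
Qed.

Lemma acceleration_rigid (t : R) :
  dcurve (dcurve xi) (sg * t + a) = vscal e (dcurve (dcurve xi) t).
Proof.
  destruct Hrigid as [Hsg _].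
  replace e with (sg * (sg * e)) by (rewrite <- Rmult_assoc, Hsg; ring).
  apply (dcurve_affine_reparam _ sg (sg * e) a (mk3 0 0 0) Hsg).
  - apply (componentwise_impl C1 _ _ (fun f Hf s => C1_ex_derive f s Hf) velocity_C1).
  - intros s. rewrite vadd_zero_l. apply velocity_rigid.
Qed.

Lemma curvature_rigid (t : R) : curvature xi (sg * t + a) = curvature xi t.
Proof.
  destruct Hrigid as [_ [He _]].
  unfold curvature, vnorm. rewrite acceleration_rigid, vdot_scal, He, Rmult_1_l.
  reflexivity.
Qed.

Lemma radius_rigid (t : R) : radius xi (sg * t + a) = radius xi t.
Proof. unfold radius. rewrite curvature_rigid. reflexivity. Qed.

Lemma normal_rigid (t : R) : normal xi (sg * t + a) = vscal e (normal xi t).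
Proof.
  unfold normal. rewrite curvature_rigid, acceleration_rigid, !vscal_scal, Rmult_comm.
  reflexivity.
Qed.

Lemma binormal_rigid (t : R) : binormal xi (sg * t + a) = vscal sg (binormal xi t).
Proof.
  destruct Hrigid as [_ [He _]].
  unfold binormal, tangent. rewrite velocity_rigid, normal_rigid, vcross_scal.
  rewrite Rmult_assoc, He, Rmult_1_r. reflexivity.
Qed.

Lemma torsion_rigid (t : R) : torsion xi (sg * t + a) = e * torsion xi t.
Proof.
  destruct Hrigid as [Hsg _].
  unfold torsion.
  rewrite (dcurve_affine_reparam (normal xi) sg e a (mk3 0 0 0) Hsg).
  - rewrite binormal_rigid, vdot_scal.
    replace (sg * e * sg) with (sg * sg * e) by ring. rewrite Hsg. ring.
  - apply (componentwise_impl C1 _ _ (fun f Hf s => C1_ex_derive f s Hf) normal_C1).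
  - intros s. rewrite vadd_zero_l. apply normal_rigid.
Qed.

End Rigid.

Lemma periodic_rigid (L : R) : (forall t, xi (t + L) = xi t) -> rigid_reparam 1 1 L.
Proof.
  intros Hper. split; [ring|split; [ring|]]. exists (mk3 0 0 0).
  intros t. rewrite vadd_zero_l, vscal_one, Rmult_1_l. apply Hper.
Qed.

Lemma centrally_symmetric_rigid :
  centrally_symmetric xi -> exists sg a, rigid_reparam sg (-1) a.
Proof.
  intros [c [t1 [Hsym | Hsym]]].
  - exists 1, t1. split; [ring|split; [ring|]]. exists (vscal 2 c).
    intros t. rewrite Rmult_1_l. apply Hsym.
  - exists (-1), t1. split; [ring|split; [ring|]]. exists (vscal 2 c).
    intros t. replace (-1 * t + t1) with (t1 - t) by ring. apply Hsym.
Qed.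

Lemma monge_evolute_shift (alpha : R -> R) (L d : R) :
  (forall t, xi (t + L) = xi t) -> (forall t, alpha (t + L) = alpha t + d) ->
  forall t, monge_evolute xi alpha (t + L) = monge_evolute xi (fun s => alpha s + d) t.
Proof.
  intros Hper Hdrift t. pose proof (periodic_rigid L Hper) as Hrig.
  unfold monge_evolute. rewrite Hper, Hdrift.
  replace (t + L) with (1 * t + L) by ring.
  rewrite (normal_rigid 1 1 L Hrig), (binormal_rigid 1 1 L Hrig), (radius_rigid 1 1 L Hrig),
    !vscal_one.
  reflexivity.
Qed.

End Frenet.

(** * The angle [alpha] and the closing condition *)

(** Under [t ↦ sg t + a] with [tau ↦ -tau], the primitive [alpha] of [tau]
    satisfies [alpha (sg t + a) = - sg alpha t + C]; this is incompatible with a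
    drift [alpha (t + L) = alpha t + d] unless [d = 0]. *)
Lemma no_drift_under_reflection (f : R -> R) (L d sg a C : R) :
  (forall t, f (t + L) = f t + d) -> (sg = 1 \/ sg = -1) ->
  (forall t, f (sg * t + a) = - sg * f t + C) -> d = 0.
Proof.
  intros Hdrift Hsg Hrefl.
  pose proof (Hrefl 0) as H0. pose proof (Hrefl L) as HL.
  pose proof (Hdrift 0) as HL0. rewrite Rplus_0_l in HL0.
  destruct Hsg as [-> | ->].
  - pose proof (Hdrift a) as Ha.
    replace (1 * L + a) with (a + L) in HL by ring. replace (1 * 0 + a) with a in H0 by ring.
    lra.
  - pose proof (Hdrift (a - L)) as Ha. replace (a - L + L) with a in Ha by ring.
    replace (-1 * L + a) with (a - L) in HL by ring. replace (-1 * 0 + a) with a in H0 by ring.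
    lra.
Qed.

Lemma tan_shift_of_sin_zero (x d : R) :
  sin d = 0 -> (cos x <> 0 <-> cos (x + d) <> 0) /\ (cos x <> 0 -> tan (x + d) = tan x).
Proof.
  intros Hd.
  assert (Hcd : cos d <> 0).
  { intros Z. pose proof (sin2_cos2 d) as S. rewrite Hd, Z in S. unfold Rsqr in S. lra. }
  assert (Hc : cos (x + d) = cos d * cos x) by (rewrite cos_plus, Hd; ring).
  assert (Hs : sin (x + d) = cos d * sin x) by (rewrite sin_plus, Hd; ring).
  split; [rewrite Hc; split|].
  - intros Hx. apply Rmult_integral_contrapositive; auto.
  - intros Hx Z. apply Hx. rewrite Z. ring.
  - intros Hx. unfold tan. rewrite Hc, Hs. field. auto.
Qed.

Lemma sin_zero_of_tan_shift (x d : R) :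
  (cos x <> 0 <-> cos (x + d) <> 0) -> (cos x <> 0 -> tan (x + d) = tan x) -> sin d = 0.
Proof.
  intros Hcos Htan. replace d with (x + d - x) by ring. rewrite sin_minus.
  destruct (Req_dec (cos x) 0) as [Hx | Hx].
  - assert (Hxd : cos (x + d) = 0).
    { destruct (Req_dec (cos (x + d)) 0) as [? | Hne]; [assumption|].
      exfalso. exact (proj2 Hcos Hne Hx). }
    rewrite Hx, Hxd. ring.
  - pose proof (Htan Hx) as T. pose proof (proj1 Hcos Hx) as Hxd. unfold tan in T.
    assert (E : sin (x + d) * cos x = sin x * cos (x + d)).
    { transitivity (sin (x + d) / cos (x + d) * (cos x * cos (x + d))); [field; exact Hxd|].
      rewrite T. field. exact Hx. }
    lra.
Qed.

(** * The Monge evolute *)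

Lemma monge_evolute_tan_eq (xi : R -> vec3) (beta gamma : R -> R) (t : R) :
  0 < radius xi t -> vdot (binormal xi t) (binormal xi t) = 1 ->
  monge_evolute xi beta t = monge_evolute xi gamma t -> tan (beta t) = tan (gamma t).
Proof.
  intros Hr Hb E. apply (f_equal (fun w => vdot w (binormal xi t))) in E.
  unfold monge_evolute in E. set (r := radius xi t) in *. set (B := binormal xi t) in *.
  assert (E' : r * tan (beta t) * vdot B B = r * tan (gamma t) * vdot B B)
    by (unfold vdot, vadd, vscal in *; cbn in *; lra).
  rewrite Hb, !Rmult_1_r in E'. apply Rmult_eq_reg_l with r; lra.
Qed.

Lemma evolute_periodic_iff_sin_drift (xi : R -> vec3) (alpha : R -> R) (L d : R) :
  (forall t, alpha (t + L) = alpha t + d) ->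
  (forall t, monge_evolute xi alpha (t + L) = monge_evolute xi (fun s => alpha s + d) t) ->
  (forall t, 0 < radius xi t) -> (forall t, vdot (binormal xi t) (binormal xi t) = 1) ->
  (evolute_periodic xi alpha L <-> sin d = 0).
Proof.
  intros Hdrift Hshift Hr Hb. unfold evolute_periodic, Jset. split.
  - intros [HJ Heta]. apply (sin_zero_of_tan_shift (alpha 0)).
    + rewrite <- Hdrift, Rplus_0_l, <- (HJ L). split.
      * intros H0. exists 0. split; [exact H0 | ring].
      * intros [t [Ht Et]]. replace t with 0 in Ht by lra. exact Ht.
    + intros H0. apply (monge_evolute_tan_eq xi (fun s => alpha s + d) alpha 0); auto.
      rewrite <- Hshift. apply Heta, H0.
  - intros Hd. pose proof (fun x => tan_shift_of_sin_zero x d Hd) as Hshift_tan. split.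
    + intros s. split.
      * intros [t [Ht ->]]. rewrite Hdrift. apply (proj1 (Hshift_tan (alpha t))), Ht.
      * intros Hs. exists (s - L). split; [|ring].
        apply (proj1 (Hshift_tan (alpha (s - L)))). rewrite <- Hdrift. replace (s - L + L) with s by ring. exact Hs.
    + intros t Ht. rewrite Hshift. unfold monge_evolute. cbv beta.
      rewrite (proj2 (Hshift_tan (alpha t)) Ht). reflexivity.
Qed.

Theorem mainTheorem16 (xi : R -> vec3) (L : R) (alpha : R -> R) :
  0 < L ->
  smooth_curve xi ->
  (forall t, xi (t + L) = xi t) ->
  (forall t, vnorm (tangent xi t) = 1) ->
  (forall t, 0 < curvature xi t) ->
  (forall t, is_derive alpha t (torsion xi t)) ->
  (evolute_periodic xi alpha L <->
     exists m : Z, RInt (torsion xi) 0 L = IZR m * PI) /\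
  (centrally_symmetric xi ->
     RInt (torsion xi) 0 L = 0 /\ evolute_periodic xi alpha L).
Proof.
  intros _ Hs Hper Hunit Hk Halpha.
  set (d := alpha L - alpha 0).
  pose proof (periodic_rigid xi L Hper) as Hrig.
  assert (Hdrift : forall t, alpha (t + L) = alpha t + d).
  { intros t. replace (t + L) with (1 * t + L) by ring.
    rewrite (primitive_affine_reparam alpha (torsion xi) 1 1 L Halpha
               (torsion_rigid xi Hs Hk 1 1 L Hrig)).
    unfold d. ring. }
  assert (Hint : RInt (torsion xi) 0 L = d)
    by exact (RInt_of_primitive alpha _ 0 L Halpha (torsion_continuous xi Hs Hk)).
  assert (Hclose : evolute_periodic xi alpha L <-> sin d = 0).
  { apply evolute_periodic_iff_sin_drift; auto.
    - apply monge_evolute_shift; auto.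
    - intros t. apply Rinv_0_lt_compat, Hk.
    - intros t. apply binormal_unit; auto. }
  rewrite Hint, Hclose. split; [split; [apply sin_eq_0_0 | apply sin_eq_0_1]|].
  intros Hsym. destruct (centrally_symmetric_rigid xi Hsym) as [sg [a Hrefl]].
  assert (Hd0 : d = 0).
  { apply (no_drift_under_reflection alpha L d sg a (alpha a - sg * -1 * alpha 0) Hdrift).
    - destruct Hrefl as [Hsg _]. nra.
    - intros t. rewrite (primitive_affine_reparam alpha (torsion xi) sg (-1) a Halpha
                          (torsion_rigid xi Hs Hk sg (-1) a Hrefl)). ring. }
  rewrite Hd0, sin_0. split; reflexivity.
Qed.
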